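(* Let $K_1,K_2$ be finite simplicial complexes on disjoint vertex sets, let $k\ge 0$, and let $K=K_1\vee_k K_2$ be a $k$-wedge sum obtained by identifying a $k$-face $F_1$ of $K_1$ with a $k$-face $F_2$ of $K_2$. If $i\ge k-1$ (and $i\ge 0$), then $B_i(K)$ is balanced if and only if both $B_i(K_1)$ and $B_i(K_2)$ are balanced.
   Context: $S_j(K)$ denotes the set of faces of cardinality $j+1$. The $k$-wedge sum: given $F_1=\{v_0,\dots,v_k\}\in S_k(K_1)$, $F_2=\{u_0,\dots,u_k\}\in S_k(K_2)$ and a bijection $v_j\mapsto u_j$, $K_1\vee_kK_2$ is the complex obtained from $K_1\cup K_2$ by identifying $v_j$ with $u_j$ for all $j$ (so $F_1$ and all its subfaces are identified with $F_2$ and its subfaces). For a complex $K$ with an orientation (ordering of each face up to even permutations), $B_i(K)$ is the signed bipartite graph with vertex set $S_i(K)\cup S_{i+1}(K)$, an edge $\{F,\bar F\}$ whenever $F\subset\bar F$, with sign $\mathrm{sgn}([F],\partial[\bar F])$ (equal to $(-1)^j$ if $F$ is $\bar F$ with its $j$-th vertex removed and the orientation of $F$ agrees with the induced one, and $-(-1)^j$ otherwise). A signed graph is balanced if every cycle has positive sign (product of edge signs); balancedness of $B_i(K)$ does not depend on the chosen orientation. *)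

From mathcomp Require Import all_boot.
Set Implicit Arguments. Unset Strict Implicit. Unset Printing Implicit Defensive.

Section SC.
Variable V : finType.

Definition is_complex (K : {set {set V}}) : Prop :=
  forall s t : {set V}, s \in K -> t \subset s -> t \in K.

Definition verts (K : {set {set V}}) : {set V} := \bigcup_(s in K) s.

(* k-wedge sum: vertices v of F1 are identified with f v in F2 *)
Definition wedge_map (F1 : {set V}) (f : V -> V) (v : V) : V :=
  if v \in F1 then f v else v.

Definition wedge (K1 K2 : {set {set V}}) (F1 : {set V}) (f : V -> V) : {set {set V}} :=
  (fun s : {set V} => wedge_map F1 f @: s) @: (K1 :|: K2).

Definition is_orientation (K : {set {set V}}) (o : {set V} -> seq V) : Prop :=
  forall s, s \in K -> perm_eq (o s) (enum s).

(* number of inversions of s relative to t; its parity is that of the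
   permutation carrying t to s *)
Definition ninv (s t : seq V) : nat :=
  #|[set p : V * V | [&& p.1 \in s, p.2 \in s, index p.1 s < index p.2 s
                        & index p.2 t < index p.1 t]]|.

(* sign bit (true = negative) of sgn([A], d[B]) for A \subset B, #|B| = #|A|+1:
   j = position of the removed vertex in the ordering of B, and the induced
   orientation of A is the ordering of B with that vertex removed. *)
Definition sgnbit (o : {set V} -> seq V) (A B : {set V}) : bool :=
  let j := find (fun x => x \notin A) (o B) in
  let ind := [seq x <- o B | x \in A] in
  odd (j + ninv (o A) ind).

Definition esign (o : {set V} -> seq V) (A B : {set V}) : bool :=
  if #|A| < #|B| then sgnbit o A B else sgnbit o B A.

Definition Badj (K : {set {set V}}) (i : nat) (A B : {set V}) : bool :=
  [&& A \in K, B \in K &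
   [&& #|A| == i.+1, #|B| == i.+2 & A \subset B]
   || [&& #|B| == i.+1, #|A| == i.+2 & B \subset A]].

Definition balanced (K : {set {set V}}) (o : {set V} -> seq V) (i : nat) : Prop :=
  forall c : seq {set V}, uniq c -> 2 < size c -> cycle (Badj K i) c ->
    ~~ odd (sumn (map (fun p => nat_of_bool (esign o p.1 p.2)) (zip c (rot 1 c)))).

End SC.

(* A signed graph is balanced iff every closed walk has an even number of
   negative edges, because a closed walk through a repeated vertex splits into
   two shorter ones.  The faces of K = K1 v_k K2 are the images of the faces of
   K1 under the identifying map, together with the faces of K2; that map is
   injective on the vertices of K1 and of K2, and changing the orientation
   along it alters the signs of B_i only by a coboundary, so closed walks keep
   their parity when transported between B_i(K1), B_i(K2) and B_i(K).  This
   gives one direction.  Conversely the faces lying in both parts are exactly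
   the subsets of the shared simplex F2, and since #|F2| <= i + 2 those which
   are vertices of B_i(K) form a star around F2 (or a single vertex).  An
   excursion of a closed walk away from the K1 part stays in the K2 part and
   starts and ends in this star, so closing it up through the star splits the
   walk into a closed walk of the K2 part and one with fewer vertices outside
   the K1 part. *)

From mathcomp Require Import all_boot zify.
Set Implicit Arguments. Unset Strict Implicit. Unset Printing Implicit Defensive.

Section Inversions.
Variable V : finType.
Implicit Types s t u : seq V.

Definition inverted s t (p : V * V) : bool :=
  [&& p.1 \in s, p.2 \in s, index p.1 s < index p.2 s & index p.2 t < index p.1 t].

Lemma ninvE s t : ninv s t = \sum_p inverted s t p.
Proof.
rewrite /ninv -sum1_card big_mkcond /=; apply: eq_bigr => p _.
by rewrite inE /inverted; case: andP.
Qed.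

Lemma ninv_refl s : ninv s s = 0.
Proof.
rewrite ninvE big1 // => p _; rewrite /inverted.
by case: ltngtP; rewrite !andbF.
Qed.

Lemma index_ltNgt s x y : x \in s -> y \in s -> x != y ->
  (index y s < index x s) = ~~ (index x s < index y s).
Proof.
move=> xs ys nxy; rewrite ltnNge leq_eqVlt; case: eqP => //= /index_inj.
by move=> /(_ x xs ys) exy; rewrite exy eqxx in nxy.
Qed.

(* Pairs inverted from [s] to [t] and back from [t] to [u]: they are counted
   by [ninv s t] and [ninv t u] but not by [ninv s u]. *)
Definition inverted_back s t u (p : V * V) : bool :=
  inverted s t p && (index p.1 u < index p.2 u).

Lemma ninv_trans_double s t u : s =i t -> s =i u ->
  ninv s u + 2 * \sum_p inverted_back s t u p = ninv s t + ninv t u.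
Proof.
move=> est esu.
have swap : \sum_p inverted_back s t u p = \sum_p inverted_back s t u (p.2, p.1).
  by rewrite (reindex_inj (h := fun p : V * V => (p.2, p.1))) //= => -[? ?] [? ?] [-> ->].
rewrite !ninvE mul2n -addnn {2}swap addnA -!big_split /=.
apply: eq_bigr => -[x y] _; rewrite /inverted_back /inverted /= -!est.
case xs: (x \in s); case ys: (y \in s) => //=.
case: (eqVneq x y) => [->|nxy]; first by rewrite !ltnn.
have [xt yt] : x \in t /\ y \in t by rewrite -!est.
have [xu yu] : x \in u /\ y \in u by rewrite -!esu.
rewrite (index_ltNgt xs ys nxy) (index_ltNgt xt yt nxy) (index_ltNgt xu yu nxy).
by case: (index x s < index y s); case: (index x t < index y t); case: (index x u < index y u).
Qed.

Lemma odd_ninv_trans s t u : s =i t -> s =i u ->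
  odd (ninv s u) = odd (ninv s t) (+) odd (ninv t u).
Proof.
by move=> est esu; rewrite -oddD -(ninv_trans_double est esu) oddD oddM addbF.
Qed.

Lemma odd_ninvC s t : s =i t -> odd (ninv s t) = odd (ninv t s).
Proof.
move=> est; have := odd_ninv_trans est (frefl _).
by rewrite ninv_refl /=; case: (odd (ninv s t)); case: (odd (ninv t s)).
Qed.

Lemma index_map_in (g : V -> V) s x : {in s &, injective g} -> x \in s ->
  index (g x) (map g s) = index x s.
Proof.
elim: s => [//|y s IH] inj /=; rewrite in_cons.
case: (eqVneq y x) => [->|nyx] /=; first by rewrite eqxx.
move=> xs; have -> : (g y == g x) = false.
  apply: contraNF nyx => /eqP /inj -> //; by rewrite in_cons ?eqxx ?xs ?orbT.
by rewrite IH // => a b ha hb; apply: inj; rewrite in_cons ?ha ?hb orbT.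
Qed.

Lemma mem_map_imset (g : V -> V) s (X : {set V}) : s =i X -> map g s =i g @: X.
Proof.
move=> sX z; apply/mapP/imsetP => -[x xX ->]; exists x => //; by rewrite ?sX // -sX.
Qed.

Lemma ninv_map (g : V -> V) s t : {in s &, injective g} -> s =i t ->
  ninv (map g s) (map g t) = ninv s t.
Proof.
move=> inj est; have injt : {in t &, injective g} by move=> a b; rewrite -!est; apply: inj.
rewrite /ninv; set S := [set p : V * V | [&& p.1 \in s, p.2 \in s, _ & _]].
have injS : {in S &, injective (fun p : V * V => (g p.1, g p.2))}.
  move=> [x y] [x' y']; rewrite !inE => /= /and4P [xs ys _ _] /and4P [xs' ys' _ _] [e1 e2] /=.
  by rewrite (inj _ _ xs xs' e1) (inj _ _ ys ys' e2).
rewrite -(card_in_imset injS); apply: eq_card => -[a b].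
rewrite [in LHS]inE /=; apply/idP/imsetP.
  case/and4P => /mapP [x xs ->] /mapP [y ys ->].
  have [xt yt] : x \in t /\ y \in t by rewrite -!est.
  rewrite !index_map_in // => lt_s lt_t.
  by exists (x, y) => //; rewrite inE /= xs ys lt_s lt_t.
case=> -[x y]; rewrite inE /= => /and4P [xs ys lt_s lt_t] [-> ->].
have [xt yt] : x \in t /\ y \in t by rewrite -!est.
by rewrite !map_f // !index_map_in // lt_s lt_t.
Qed.

Lemma ninv_cons v s t : v \notin s -> ninv (v :: s) (v :: t) = ninv s t.
Proof.
move=> vs; rewrite !ninvE; apply: eq_bigr => -[x y] _; rewrite /inverted /= !in_cons.
case: (eqVneq x v) => [->|_]; first by rewrite (negbTE vs) ltn0 !andbF.
case: (eqVneq y v) => [->|_]; first by rewrite (negbTE vs) !andbF.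
by rewrite /= !ltnS.
Qed.

Lemma index_filter_lt (P : pred V) t x y : x \in filter P t -> y \in filter P t ->
  index x (filter P t) < index y (filter P t) -> index x t < index y t.
Proof.
elim: t => [//|z t IH] /=; case Pz: (P z) => /=.
  rewrite !in_cons; case: (eqVneq z x) => [//|nzx] /=; first by case: (eqVneq z y).
  by case: (eqVneq z y) => [//|nzy] /=; rewrite ltnS; exact: IH.
move=> xP yP lt_xy; have [nzx nzy] : z != x /\ z != y.
  by split; apply: contraFneq Pz => ->; [move: xP | move: yP]; rewrite mem_filter => /andP [].
by rewrite (negbTE nzx) (negbTE nzy) ltnS IH.
Qed.

Lemma ninv_move_head v t : uniq t -> v \in t ->
  ninv (v :: filter (predC1 v) t) t = index v t.
Proof.
move=> ut vt; set r := filter (predC1 v) t; rewrite /ninv.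
have -> : [set p : V * V | [&& p.1 \in v :: r, p.2 \in v :: r,
            index p.1 (v :: r) < index p.2 (v :: r) & index p.2 t < index p.1 t]]
          = [set (v, y) | y in [set y in take (index v t) t]].
  apply/setP => -[x y]; rewrite inE /=; apply/idP/imsetP.
    case/and4P; rewrite !in_cons /=.
    case: (eqVneq x v) => [->|nxv] xr; case: (eqVneq y v) => [->|nyv] //= yr.
      move=> _ lt_yv; exists y => //; rewrite inE in_take //.
      by move: yr; rewrite mem_filter => /andP [].
    by rewrite ltnS => /(index_filter_lt xr yr); rewrite ltnNge => /negP + /ltnW.
  case=> y'; rewrite inE => yt' [-> ->].
  have yt : y' \in t by apply: mem_take yt'.
  have lt_yv : index y' t < index v t by rewrite -in_take.
  have nyv : y' != v by apply: contraTneq lt_yv => ->; rewrite ltnn.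
  by rewrite !in_cons eqxx /= (negbTE nyv) eq_sym (negbTE nyv) lt_yv mem_filter /= nyv yt.
rewrite card_imset; last by move=> a b [].
by rewrite cardsE (card_uniqP _) ?take_uniq // size_take index_mem vt.
Qed.

End Inversions.

Section Sgnbit.
Variable V : finType.
Implicit Types (A : {set V}) (o p q : {set V} -> seq V).

Lemma perm_enum_mem (s : seq V) A : perm_eq s (enum A) -> s =i A.
Proof. by move=> sA x; rewrite (perm_mem sA) mem_enum. Qed.

Lemma sgnbit_ninv o A v : v \notin A ->
  perm_eq (o A) (enum A) -> perm_eq (o (v |: A)) (enum (v |: A)) ->
  sgnbit o A (v |: A) = odd (ninv (v :: o A) (o (v |: A))).
Proof.
move=> vA /perm_enum_mem oA oB_perm; have oB := perm_enum_mem oB_perm.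
set pa := o A; set pb := o (v |: A); set r := filter (predC1 v) pb.
have notA_v x : x \in pb -> (x \notin A) = (x == v).
  by rewrite oB in_setU1; case: eqVneq => [->|] //= _ ->.
have rA : r =i A.
  move=> x; rewrite mem_filter oB in_setU1 /=.
  by case: eqVneq => [->|]; rewrite ?(negbTE vA).
rewrite /sgnbit -/pa -/pb.
have -> : find (fun x => x \notin A) pb = index v pb by apply: eq_in_find => x /notA_v.
have -> : [seq x <- pb | x \in A] = r.
  by apply: eq_in_filter => x /notA_v /= <-; rewrite negbK.
have ub : uniq pb by rewrite (perm_uniq oB_perm) enum_uniq.
rewrite -(ninv_move_head ub) -/r; last by rewrite oB setU11.
have vpa : v \notin pa by rewrite oA.
rewrite -(ninv_cons r vpa) oddD.
rewrite [RHS](odd_ninv_trans (t := v :: r)) 1?addbC // => x.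
  by rewrite !in_cons oA rA.
by rewrite in_cons oA oB in_setU1.
Qed.

(* The coboundary by which transporting the orientation [p] along [g] and
   comparing with [q] changes the edge signs, see [esign_relabel]. *)
Definition relabel_parity p q (g : V -> V) (X : {set V}) := odd (ninv (q (g @: X)) (map g (p X))).

Lemma sgnbit_relabel p q (g : V -> V) A v : v \notin A -> {in v |: A &, injective g} ->
  perm_eq (p A) (enum A) -> perm_eq (p (v |: A)) (enum (v |: A)) ->
  perm_eq (q (g @: A)) (enum (g @: A)) ->
  perm_eq (q (g @: (v |: A))) (enum (g @: (v |: A))) ->
  sgnbit q (g @: A) (g @: (v |: A)) =
  sgnbit p A (v |: A) (+) relabel_parity p q g A (+) relabel_parity p q g (v |: A).
Proof.
move=> vA inj pA pB qA qB; rewrite /relabel_parity.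
have gA := perm_enum_mem qA; have gB := perm_enum_mem qB.
move/perm_enum_mem: (pA) => mpA; move/perm_enum_mem: (pB) => mpB.
rewrite imsetU1 in qB gB *; set w := g v.
have wA : w \notin g @: A.
  apply/imsetP => -[x xA /inj]; rewrite !in_setU1 eqxx xA orbT => /(_ isT isT) vx.
  by rewrite vx xA in vA.
have injp : {in v :: p A &, injective g}.
  by move=> x y; rewrite !in_cons !mpA -!in_setU1; apply: inj.
rewrite !sgnbit_ninv //.
set qa := q (g @: A); set qb := q (w |: g @: A); set pa := p A; set pb := p (v |: A).
have mga : map g pa =i g @: A by apply: mem_map_imset.
have mgb : map g pb =i w |: g @: A by rewrite -imsetU1; apply: mem_map_imset.
rewrite (odd_ninv_trans (t := w :: map g pa)); first last.
- by move=> x; rewrite in_cons gA gB in_setU1.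
- by move=> x; rewrite !in_cons gA mga.
rewrite ninv_cons ?gA // (odd_ninv_trans (s := w :: map g pa) (t := map g pb)); first last.
- by move=> x; rewrite in_cons mga gB in_setU1.
- by move=> x; rewrite in_cons mga mgb in_setU1.
rewrite -[w :: _]/(map g (v :: pa)) ninv_map //; last by move=> x; rewrite in_cons mpA mpB in_setU1.
rewrite (odd_ninvC (s := map g pb)); last by move=> x; rewrite mgb gB.
by rewrite addbCA addbA.
Qed.
End Sgnbit.

Section ClosedWalks.
Variables (T : eqType) (adj : rel T) (e : T -> T -> nat).
Implicit Types (x y : T) (c l : seq T).

Fixpoint path_sum x l := if l is y :: l' then e x y + path_sum y l' else 0.

Definition cycle_sum c := sumn (map (fun p => e p.1 p.2) (zip c (rot 1 c))).

Lemma cycle_sum_cons x l : cycle_sum (x :: l) = path_sum x (rcons l x).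
Proof.
rewrite /cycle_sum rot1_cons; move: {1 3}x.
by elim: l => [|y l IH] z //=; rewrite IH.
Qed.

Lemma path_sum_cat x l1 l2 : path_sum x (l1 ++ l2) = path_sum x l1 + path_sum (last x l1) l2.
Proof. by elim: l1 x => [|y l1 IH] x //=; rewrite IH addnA. Qed.

Lemma path_sum_rcons_cat x l1 y l2 z :
  path_sum x (rcons (l1 ++ y :: l2) z) = path_sum x (rcons l1 y) + path_sum y (rcons l2 z).
Proof. by rewrite rcons_cat -cat_rcons path_sum_cat last_rcons. Qed.

Lemma cycle_sum_catC c1 c2 : cycle_sum (c1 ++ c2) = cycle_sum (c2 ++ c1).
Proof.
case: c1 c2 => [|x l1] [|y l2]; rewrite ?cats0 //=.
by rewrite !cycle_sum_cons !path_sum_rcons_cat addnC.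
Qed.

Lemma cycle_catC c1 c2 : cycle adj (c1 ++ c2) = cycle adj (c2 ++ c1).
Proof. by rewrite -(rot_cycle (size c1)) rot_size_cat. Qed.

Lemma cycle_sum_rot n c : cycle_sum (rot n c) = cycle_sum c.
Proof. by rewrite /rot cycle_sum_catC cat_take_drop. Qed.

Lemma cycle_sum_split x l1 l2 :
  cycle_sum (x :: l1 ++ x :: l2) = cycle_sum (x :: l1) + cycle_sum (x :: l2).
Proof. by rewrite !cycle_sum_cons path_sum_rcons_cat. Qed.

Lemma cycle_split x l1 l2 :
  cycle adj (x :: l1 ++ x :: l2) = cycle adj (x :: l1) && cycle adj (x :: l2).
Proof. by rewrite /cycle /= rcons_cat -cat_rcons cat_path last_rcons. Qed.

Lemma cycle_cat_cons s r t w :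
  cycle adj (s :: r ++ t :: w) = path adj s (rcons r t) && path adj t (rcons w s).
Proof. by rewrite /cycle /= rcons_cat -cat_rcons cat_path last_rcons. Qed.

Lemma last_rev_belast x p : last (last x p) (rev (belast x p)) = x.
Proof. by case: p => [|y p] //=; rewrite rev_cons last_rcons. Qed.

Hypothesis adj_sym : symmetric adj.
Hypothesis e_sym : forall x y, adj x y -> e x y = e y x.

Lemma path_sum_rev x p : path adj x p -> path_sum (last x p) (rev (belast x p)) = path_sum x p.
Proof.
elim: p x => [|y p IH] x //= /andP [axy yp].
rewrite rev_cons -cats1 path_sum_cat IH // last_rev_belast /= addn0 addnC.
by rewrite (e_sym axy).
Qed.

Lemma odd_cycle_sum_detour s r t w p : path adj s p -> last s p = t ->
  odd (cycle_sum (s :: r ++ t :: w)) =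
  odd (cycle_sum (s :: p ++ w)) (+) odd (cycle_sum (t :: rev (belast s p) ++ r)).
Proof.
move=> sp <-; rewrite !cycle_sum_cons path_sum_rcons_cat !rcons_cat !path_sum_cat.
rewrite last_rev_belast path_sum_rev // !oddD.
by case: (odd (path_sum s p)); case: (odd (path_sum s _)); case: (odd (path_sum _ _)).
Qed.

Lemma cycle_detour s r t w p : path adj s p -> last s p = t ->
  cycle adj (s :: r ++ t :: w) ->
  cycle adj (s :: p ++ w) /\ cycle adj (t :: rev (belast s p) ++ r).
Proof.
move=> sp pt; rewrite cycle_cat_cons => /andP [srt tws].
rewrite /cycle /= !rcons_cat !cat_path pt tws sp; split=> //.
rewrite -{1}pt rev_path -{1}pt last_rev_belast srt andbT.
by apply: sub_path sp => a b; rewrite adj_sym.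
Qed.

Lemma not_uniq_split c : ~~ uniq c -> exists a x b d, c = a ++ x :: b ++ x :: d.
Proof.
elim: c => [//|y c IH] /=; rewrite negb_and negbK; case yc: (y \in c) => /=.
  by move=> _; case/splitPr: yc => b d; exists [::], y, b, d.
by case/IH => a [x [b [d ->]]]; exists (y :: a), x, b, d.
Qed.

Hypothesis adj_irr : irreflexive adj.

Lemma even_closed_walks_of_cycles :
  (forall c, uniq c -> 2 < size c -> cycle adj c -> ~~ odd (cycle_sum c)) ->
  forall c, cycle adj c -> ~~ odd (cycle_sum c).
Proof.
move=> even_cycles c; have [n] := ubnP (size c).
elim: n c => // n IH c size_c cc.
have [uc|/not_uniq_split [a [x [b [d ec]]]]] := boolP (uniq c).
  case: (ltnP 2 (size c)) => [c2|size_c2]; first exact: even_cycles uc c2 cc.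
  case: c uc size_c cc size_c2 => [|x [|y [|z c]]] //= _ _; first by rewrite adj_irr.
  case/andP => axy _ _; rewrite cycle_sum_cons /= addn0 (e_sym axy).
  by rewrite addnn odd_double.
move: cc; rewrite ec cycle_catC cycle_sum_catC.
rewrite cat_cons -catA cat_cons cycle_split cycle_sum_split oddD => /andP [cb cd].
have [sb sd] : size (x :: b) < n /\ size (x :: d ++ a) < n.
  by move: size_c; rewrite ec /= !size_cat /= !size_cat /=; lia.
by rewrite (negbTE (IH _ sb cb)) (negbTE (IH _ sd cd)).
Qed.

Section Glue.
Variables P1 P2 : pred T.
Hypothesis adj_cover : forall x y, adj x y -> P1 x || P2 x.
Hypothesis adj_P1 : forall x y, adj x y -> P1 x -> ~~ P2 x -> P1 y.
Hypothesis adj_P2 : forall x y, adj x y -> P2 x -> ~~ P1 x -> P2 y.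
Hypothesis connected_shared : forall s t s' t', adj s s' -> adj t t' ->
  P1 s -> P2 s -> P1 t -> P2 t ->
  exists p, [/\ path adj s p, last s p = t & all (fun z => P1 z && P2 z) p].
Hypothesis even_P1 : forall c, cycle adj c -> all P1 c -> ~~ odd (cycle_sum c).
Hypothesis even_P2 : forall c, cycle adj c -> all P2 c -> ~~ odd (cycle_sum c).

Lemma cycle_cover c z : cycle adj c -> z \in c -> P1 z || P2 z.
Proof. by move=> cc zc; apply: adj_cover (next_cycle cc zc). Qed.

(* The excursion [r] out of [P1] runs inside [P2], so it can be closed up
   through the shared vertices into a closed walk of [P2]; what remains has
   fewer vertices outside [P1]. *)
Lemma even_excursion n s x r t w :
  (forall c, count (predC P1) c < n -> cycle adj c -> ~~ odd (cycle_sum c)) ->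
  count (predC P1) (s :: (x :: r) ++ t :: w) <= n ->
  cycle adj (s :: (x :: r) ++ t :: w) ->
  P1 s -> P1 t -> all (predC P1) (x :: r) ->
  ~~ odd (cycle_sum (s :: (x :: r) ++ t :: w)).
Proof.
move=> IH count_c cc P1s P1t out_r.
have P2r : all P2 (x :: r).
  apply/allP => z zr; have /negPf nz := allP out_r z zr.
  by rewrite -[P2 z]orFb -nz; apply: (cycle_cover cc); rewrite in_cons mem_cat zr orbT.
move: (cc); rewrite cycle_cat_cons => /andP [srt _].
have asx : adj s x by case/andP: srt.
have P2s : P2 s.
  apply/negPn/negP => nP2s; have := allP out_r x (mem_head _ _).
  by rewrite /= (adj_P1 asx P1s nP2s).
have ayt : adj (last x r) t.
  by move: srt; rewrite -cats1 cat_path /= andbT => /andP [].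
have P2t : P2 t.
  apply: (adj_P2 ayt); first by apply: (allP P2r); exact: mem_last.
  by apply: (allP out_r); exact: mem_last.
rewrite adj_sym in ayt.
have [p [sp pt shared_p]] := connected_shared asx ayt P1s P2s P1t P2t.
have [cc1 cc2] := cycle_detour sp pt cc.
rewrite (odd_cycle_sum_detour _ _ sp pt) (negbTE (IH _ _ cc1)) ?(negbTE (even_P2 cc2 _)) //.
  rewrite /= P2t all_cat P2r andbT; apply/allP => z; rewrite mem_rev => /mem_belast.
  by rewrite in_cons => /orP [/eqP -> // | /(allP shared_p) /andP []].
rewrite /= count_cat; have -> : count (predC P1) p = 0.
  by apply/eqP; rewrite -leqn0 leqNgt -has_count; apply/hasPn => z /(allP shared_p) /andP [/= -> _].
have /negbTE nP1x := allP out_r x (mem_head _ _).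
move: count_c; rewrite /= !count_cat /= P1s P1t nP1x !add0n add1n.
by move/(leq_ltn_trans (leq_addl _ _)).
Qed.

Lemma even_glued_closed_walks c : cycle adj c -> ~~ odd (cycle_sum c).
Proof.
have [n] := ubnP (count (predC P1) c); elim: n c => // n IH c count_c cc.
have [all1|/allPn [x xc /= nP1x]] := boolP (all P1 c); first exact: even_P1.
have [all2|/allPn [y yc nP2y]] := boolP (all P2 c); first exact: even_P2.
have P1y : P1 y by move: (cycle_cover cc yc); rewrite (negbTE nP2y) orbF.
have [i l cl] := rot_to yc.
have has_l : has (predC P1) l.
  apply/hasP; exists x => //; move: xc; rewrite -(mem_rot i) cl in_cons.
  by case/orP => [/eqP exy | //]; rewrite exy P1y in nP1x.
have /permP count_rot : perm_eq (rot i c) c by rewrite perm_rot.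
rewrite -(cycle_sum_rot i) cl; move: cc count_c.
rewrite -(rot_cycle i) -count_rot cl => {count_rot}.
case/split_find: has_l => x0 a b nP1x0 /hasPn in_a.
have [has_b | /hasPn out_b] := boolP (has P1 b); last first.
  move=> cc _; have ayz : adj (last x0 b) y.
    move: cc; rewrite /cycle -cats1 cat_path => /andP [_].
    by rewrite /= last_cat last_rcons andbT.
  have nP1z : ~~ P1 (last x0 b).
    by have := mem_last x0 b; rewrite in_cons => /orP [/eqP -> // | /out_b].
  have P2z : P2 (last x0 b) by move: (adj_cover ayz); rewrite (negbTE nP1z).
  by move: nP2y; rewrite (adj_P2 ayz P2z nP1z).
case/split_find: has_b => t r w P1t /hasPn out_r.
have -> : y :: rcons a x0 ++ rcons r t ++ w = belast y a ++ last y a :: (x0 :: r) ++ t :: w.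
  by rewrite !cat_rcons -cat_cons lastI cat_rcons.
rewrite cycle_catC cycle_sum_catC => cc; rewrite count_cat addnC -count_cat; move: cc.
rewrite !cat_cons -!catA [(t :: w) ++ _]cat_cons => cc count_c.
apply: even_excursion IH count_c cc _ P1t _.
- have : last y a \in y :: a by exact: mem_last.
  by rewrite in_cons => /orP [/eqP -> // | /in_a /= /negPn].
- by apply/allP => z; rewrite in_cons => /orP [/eqP -> | /out_r].
Qed.
End Glue.
End ClosedWalks.

Lemma path_sum_map (T T' : eqType) (f : T -> T') (e : T' -> T' -> nat) x l :
  path_sum e (f x) (map f l) = path_sum (fun y z => e (f y) (f z)) x l.
Proof. by elim: l x => [|y l IH] x //=; rewrite IH. Qed.

Lemma cycle_sum_map (T T' : eqType) (f : T -> T') (e : T' -> T' -> nat) c :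
  cycle_sum e (map f c) = cycle_sum (fun x y => e (f x) (f y)) c.
Proof. by case: c => [//|x l]; rewrite map_cons !cycle_sum_cons -map_rcons path_sum_map. Qed.

Lemma odd_cycle_sum_coboundary (T : eqType) (adj : rel T) (e e' : T -> T -> nat)
    (d : T -> bool) :
  (forall x y, adj x y -> odd (e x y) = odd (e' x y) (+) d x (+) d y) ->
  forall c, cycle adj c -> odd (cycle_sum e c) = odd (cycle_sum e' c).
Proof.
move=> e_e' [//|x l]; rewrite !cycle_sum_cons /cycle.
have path_odd y s : path adj y s ->
    odd (path_sum e y s) = odd (path_sum e' y s) (+) d y (+) d (last y s).
  elim: s y => [|z s IH] y /=; first by case: (d y).
  case/andP => ayz zs; rewrite !oddD e_e' // IH //.
  by case: (odd (e' y z)); case: (odd (path_sum e' z s)); case: (d y); case: (d z);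
     case: (d (last z s)).
by move/path_odd ->; rewrite last_rcons addbK.
Qed.

Section FaceGraph.
Variable V : finType.
Implicit Types (K : {set {set V}}) (A B : {set V}) (o : {set V} -> seq V).

Local Notation esignn o := (fun A B => nat_of_bool (esign o A B)).

Lemma Badj_irr K i : irreflexive (Badj K i).
Proof. by move=> A; apply/negP => /and3P [_ _ /orP [] /and3P [/eqP -> /eqP]]; lia. Qed.

Lemma Badj_sym K i : symmetric (Badj K i).
Proof. by move=> A B; rewrite /Badj andbCA orbC. Qed.

Lemma esignC_Badj K i o A B : Badj K i A B -> esign o A B = esign o B A.
Proof.
by rewrite /esign => /and3P [_ _ /orP [] /and3P [/eqP -> /eqP -> _]];
  rewrite ltnSn ltnNge leqnSn.
Qed.

Lemma balanced_closed_walks K o i : balanced K o i ->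
  forall c, cycle (Badj K i) c -> ~~ odd (cycle_sum (esignn o) c).
Proof.
apply: even_closed_walks_of_cycles; last exact: Badj_irr.
by move=> A B /(esignC_Badj o) ->.
Qed.

Lemma subset_card_succ A B : A \subset B -> #|B| = #|A|.+1 -> exists2 v, v \notin A & B = v |: A.
Proof.
move=> sAB cB; have /cards1P [v BA] : #|B :\: A| == 1 by rewrite cardsDS // cB subSnn.
have vBA : v \in B :\: A by rewrite BA set11.
exists v; first by move: vBA; rewrite inE => /andP [].
by rewrite -{1}(setID B A) (setIidPr sAB) BA setUC.
Qed.

Lemma cycle_Badj_faces K i c : cycle (Badj K i) c -> all (mem K) c.
Proof. by move=> cc; apply/allP => A /(next_cycle cc) /and3P []. Qed.

Lemma sub_verts K A : A \in K -> A \subset verts K.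
Proof. by move=> AK; apply/subsetP => x xA; apply/bigcupP; exists A. Qed.

Lemma is_complex_imset (g : V -> V) K : is_complex K -> is_complex [set g @: A | A : {set V} in K].
Proof.
move=> cK _ B /imsetP [A AK ->] sBA; apply/imsetP; exists [set x in A | g x \in B].
  by apply: cK AK _; apply/subsetP => x; rewrite inE => /andP [].
apply/setP => y; apply/idP/imsetP => [yB | [x] ]; last by rewrite inE => /andP [_ ?] ->.
by have /imsetP [x xA gxy] := subsetP sBA y yB; exists x; rewrite // inE xA -gxy.
Qed.

Section Relabel.
Variables (K K' : {set {set V}}) (i : nat) (o o' : {set V} -> seq V) (g : V -> V).
Hypotheses (oK : is_orientation K o) (oK' : is_orientation K' o').
Hypothesis g_inj : {in verts K' &, injective g}.
Hypothesis g_face : forall B, B \in K' -> g @: B \in K.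

Lemma relabel_inj_face B : B \in K' -> {in B &, injective g}.
Proof. by move=> BK; apply: sub_in2 g_inj => x /(subsetP (sub_verts BK)). Qed.

Lemma relabel_subset A B : A \in K' -> B \in K' -> (g @: A \subset g @: B) = (A \subset B).
Proof.
move=> AK BK; apply/idP/idP => [/subsetP gAB|]; last exact: imsetS.
apply/subsetP => x xA; have /imsetP [y yB /g_inj gxy] := gAB _ (imset_f g xA).
by rewrite (gxy (subsetP (sub_verts AK) x xA) (subsetP (sub_verts BK) y yB)).
Qed.

Lemma Badj_relabel A B : A \in K' -> B \in K' -> Badj K i (g @: A) (g @: B) = Badj K' i A B.
Proof.
move=> AK BK; rewrite /Badj AK BK (g_face AK) (g_face BK) !relabel_subset //.
by rewrite (card_in_imset (relabel_inj_face AK)) (card_in_imset (relabel_inj_face BK)).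
Qed.

Lemma sgnbit_relabel_faces A B : A \in K' -> B \in K' -> A \subset B -> #|B| = #|A|.+1 ->
  sgnbit o (g @: A) (g @: B) =
  sgnbit o' A B (+) relabel_parity o' o g A (+) relabel_parity o' o g B.
Proof.
move=> AK BK sAB /(subset_card_succ sAB) [v vA eB]; rewrite eB in BK *.
apply: sgnbit_relabel => //; [exact: relabel_inj_face | exact: oK' | exact: oK' | |];
  by apply: oK; apply: g_face.
Qed.

Lemma esign_relabel A B : Badj K' i A B ->
  esign o (g @: A) (g @: B) =
  esign o' A B (+) relabel_parity o' o g A (+) relabel_parity o' o g B.
Proof.
case/and3P=> AK BK; rewrite /esign.
rewrite (card_in_imset (relabel_inj_face AK)) (card_in_imset (relabel_inj_face BK)).
case/orP => /and3P [/eqP cA /eqP cB sub]; rewrite cA cB ?ltnSn ?ltnNge ?leqnSn /=.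
  by rewrite sgnbit_relabel_faces // cA cB.
by rewrite sgnbit_relabel_faces // ?cA ?cB // addbAC.
Qed.

Lemma odd_cycle_sum_relabel c : cycle (Badj K' i) c ->
  odd (cycle_sum (esignn o) (map (fun B => g @: B) c)) = odd (cycle_sum (esignn o') c).
Proof.
rewrite cycle_sum_map; apply: (odd_cycle_sum_coboundary (d := relabel_parity o' o g)).
by move=> A B /esign_relabel ->; rewrite !oddb.
Qed.

Lemma balanced_relabel : balanced K o i -> balanced K' o' i.
Proof.
move=> bal c _ _ cc; rewrite -odd_cycle_sum_relabel //.
apply: (balanced_closed_walks bal); rewrite cycle_map.
apply: (sub_in_cycle _ (cycle_Badj_faces cc) cc) => A B AK BK /=.
by rewrite Badj_relabel.
Qed.

Lemma relabelK B : B \in K' -> verts K' :&: g @^-1: (g @: B) = B.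
Proof.
move=> BK; apply/setP => x; rewrite !inE; apply/andP/idP => [[xK /imsetP [y yB gxy]] | xB].
  by rewrite (g_inj xK (subsetP (sub_verts BK) y yB) gxy).
by rewrite (subsetP (sub_verts BK)) ?imset_f.
Qed.

Lemma even_closed_walks_relabel : balanced K' o' i ->
  forall c, cycle (Badj K i) c -> all (mem [set g @: B | B : {set V} in K']) c ->
  ~~ odd (cycle_sum (esignn o) c).
Proof.
move=> bal c cc img_c; set d := map (fun T : {set V} => verts K' :&: g @^-1: T) c.
have img_pre T : T \in [set g @: B | B : {set V} in K'] ->
    verts K' :&: g @^-1: T \in K' /\ g @: (verts K' :&: g @^-1: T) = T.
  by case/imsetP => B BK ->; rewrite relabelK.
have -> : c = map (fun B : {set V} => g @: B) d.
  by rewrite -map_comp map_id_in // => T /(allP img_c) /img_pre [].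
have cd : cycle (Badj K' i) d.
  rewrite cycle_map; apply: (sub_in_cycle _ img_c cc) => T U /img_pre [TK eT] /img_pre [UK eU].
  by rewrite /= -Badj_relabel // eT eU.
by rewrite odd_cycle_sum_relabel //; apply: balanced_closed_walks bal _ cd.
Qed.
End Relabel.

Lemma Badj_union_out (M1 M2 : {set {set V}}) i A B : is_complex M1 -> is_complex M2 ->
  Badj (M1 :|: M2) i A B -> A \in M1 -> A \notin M2 -> B \in M1.
Proof.
move=> cM1 cM2 /and3P [_]; rewrite inE => /orP [// | BM2] /orP [] /and3P [_ _ sub] AM1.
  by move/negP; case; apply: cM2 BM2 sub.
by move=> _; apply: cM1 AM1 sub.
Qed.

Lemma Badj_card K i A B : Badj K i A B -> (#|A| == i.+1) || (#|A| == i.+2).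
Proof. by case/and3P => _ _ /orP [/and3P [-> _ _] | /and3P [_ -> _]]; rewrite ?orbT. Qed.

Section Union.
Variables (L1 L2 : {set {set V}}) (F : {set V}) (i : nat).
Hypotheses (cL1 : is_complex L1) (cL2 : is_complex L2).
Hypothesis shared_faces : forall A, (A \in L1) && (A \in L2) = (A \subset F).
Hypothesis card_F : #|F| <= i.+2.
Local Notation L := (L1 :|: L2).

Lemma Badj_shared_facet A : A \subset F -> A != F -> (#|A| == i.+1) || (#|A| == i.+2) ->
  Badj L i A F.
Proof.
move=> sAF nAF cA; have shared_L B : B \subset F -> B \in L.
  by rewrite -shared_faces inE => /andP [->].
have AFp : A \proper F by rewrite properEneq nAF.
have lt_AF := proper_card AFp.
have cA1 : #|A| == i.+1 by case/orP: cA => // /eqP cA2; rewrite cA2 ltnNge card_F in lt_AF.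
have cF : #|F| == i.+2 by rewrite eqn_leq card_F -(eqP cA1).
by rewrite /Badj !shared_L // cA1 cF sAF.
Qed.

Lemma shared_connected A B A' B' : Badj L i A A' -> Badj L i B B' ->
  A \subset F -> B \subset F ->
  exists p, [/\ path (Badj L i) A p, last A p = B & all (fun X : {set V} => X \subset F) p].
Proof.
move=> /Badj_card cA /Badj_card cB sAF sBF.
have [-> | nAB] := eqVneq A B; first by exists [::].
have [eAF | nAF] := eqVneq A F.
  exists [:: B]; rewrite /= sBF eAF Badj_sym Badj_shared_facet //.
  by rewrite -eAF eq_sym.
have [-> | nBF] := eqVneq B F; first by exists [:: F]; rewrite /= subxx Badj_shared_facet.
by exists [:: F; B]; rewrite /= subxx sBF Badj_shared_facet // Badj_sym Badj_shared_facet.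
Qed.

Lemma balanced_union o :
  (forall c, cycle (Badj L i) c -> all (mem L1) c -> ~~ odd (cycle_sum (esignn o) c)) ->
  (forall c, cycle (Badj L i) c -> all (mem L2) c -> ~~ odd (cycle_sum (esignn o) c)) ->
  balanced L o i.
Proof.
move=> even1 even2 c _ _ cc.
apply: (even_glued_closed_walks (Badj_sym L i)) even1 even2 _ cc.
- by move=> A B /(esignC_Badj o) ->.
- by move=> A B /and3P []; rewrite inE.
- by move=> A B; apply: Badj_union_out.
- by rewrite setUC => A B; apply: Badj_union_out.
move=> A B A' B' adjA adjB AL1 AL2 BL1 BL2.
have [AF BF] : A \subset F /\ B \subset F by rewrite -!shared_faces; split; apply/andP.
have [p [Ap pB sub_p]] := shared_connected adjA adjB AF BF.
by exists p; split=> //; apply: sub_all sub_p => X; rewrite -shared_faces.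
Qed.
End Union.
End FaceGraph.

Section Wedge.
Variables (V : finType) (K1 K2 : {set {set V}}) (k i : nat) (F1 F2 : {set V}) (f : V -> V).
Hypotheses (cK1 : is_complex K1) (cK2 : is_complex K2).
Hypothesis disj : [disjoint verts K1 & verts K2].
Hypotheses (F1K1 : F1 \in K1) (F2K2 : F2 \in K2) (card_F1 : #|F1| = k.+1) (card_F2 : #|F2| = k.+1).
Hypothesis fF1 : f @: F1 = F2.

Local Notation phi := (wedge_map F1 f).
Local Notation K1' := [set phi @: s | s : {set V} in K1].

Lemma wedge_map_id x : x \in verts K2 -> phi x = x.
Proof.
move=> xK2; rewrite /wedge_map; case: ifP => // xF1.
by have := disjointFr disj (subsetP (sub_verts F1K1) x xF1); rewrite xK2.
Qed.

Lemma wedge_map_inj1 : {in verts K1 &, injective phi}.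
Proof.
have f_inj : {in F1 &, injective f} by apply/imset_injP; rewrite fF1 card_F1 card_F2.
have fK2 x : x \in F1 -> f x \in verts K2.
  by move=> xF1; apply: (subsetP (sub_verts F2K2)); rewrite -fF1 imset_f.
move=> x y xK1 yK1; rewrite /wedge_map.
case: ifP => xF1; case: ifP => yF1 // e; first exact: f_inj.
  by have := disjointFr disj yK1; rewrite -e fK2.
by have := disjointFr disj xK1; rewrite e fK2.
Qed.

Lemma wedge_map_inj2 : {in verts K2 &, injective phi}.
Proof. by move=> x y xK2 yK2; rewrite !wedge_map_id. Qed.

Lemma wedge_map_K2 : [set phi @: s | s : {set V} in K2] = K2.
Proof.
rewrite -[RHS]imset_id; apply: eq_in_imset => s sK2; rewrite -[RHS]imset_id.
by apply: eq_in_imset => x /(subsetP (sub_verts sK2)) /wedge_map_id.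
Qed.

Lemma wedgeE : wedge K1 K2 F1 f = K1' :|: K2.
Proof. by rewrite /wedge imsetU wedge_map_K2. Qed.

Lemma F2_image : F2 = phi @: F1.
Proof. by rewrite -fF1; apply: eq_in_imset => x xF1; rewrite /wedge_map xF1. Qed.

Lemma wedge_shared A : (A \in K1') && (A \in K2) = (A \subset F2).
Proof.
apply/andP/idP => [[/imsetP [s sK1 ->] sK2] | sAF2].
  apply/subsetP => _ /imsetP [x xs ->].
  case xF1: (x \in F1); first by rewrite F2_image imset_f.
  have := subsetP (sub_verts sK2) (phi x) (imset_f phi xs).
  by rewrite /wedge_map xF1 (disjointFr disj (subsetP (sub_verts sK1) x xs)).
split; last exact: cK2 F2K2 sAF2.
by apply: (is_complex_imset (g := phi) cK1 _ sAF2); rewrite F2_image imset_f.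
Qed.

Lemma wedge_face1 s : s \in K1 -> phi @: s \in wedge K1 K2 F1 f.
Proof. by move=> sK1; rewrite wedgeE inE imset_f. Qed.

Lemma wedge_face2 s : s \in K2 -> phi @: s \in wedge K1 K2 F1 f.
Proof. by move=> sK2; rewrite /wedge imset_f // inE sK2 orbT. Qed.

Variables o o1 o2 : {set V} -> seq V.
Hypothesis oK : is_orientation (wedge K1 K2 F1 f) o.
Hypotheses (oK1 : is_orientation K1 o1) (oK2 : is_orientation K2 o2).

Lemma balanced_wedge_parts :
  balanced (wedge K1 K2 F1 f) o i -> balanced K1 o1 i /\ balanced K2 o2 i.
Proof.
move=> bal; split.
  exact: balanced_relabel oK oK1 wedge_map_inj1 wedge_face1 bal.
exact: balanced_relabel oK oK2 wedge_map_inj2 wedge_face2 bal.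
Qed.

Hypothesis k_le : k <= i.+1.

Lemma balanced_wedge_glue :
  balanced K1 o1 i -> balanced K2 o2 i -> balanced (wedge K1 K2 F1 f) o i.
Proof.
move=> bal1 bal2; have := oK; rewrite wedgeE => oK'.
apply: (balanced_union (is_complex_imset cK1) cK2 wedge_shared).
- by rewrite card_F2.
- move=> c cc; apply: (even_closed_walks_relabel oK' oK1 wedge_map_inj1 _ bal1 cc).
  by rewrite -wedgeE; exact: wedge_face1.
- move=> c cc; rewrite -{1}wedge_map_K2.
  apply: (even_closed_walks_relabel oK' oK2 wedge_map_inj2 _ bal2 cc).
  by rewrite -wedgeE; exact: wedge_face2.
Qed.
End Wedge.

Theorem mainTheorem5 (V : finType) (K1 K2 : {set {set V}}) (k i : nat)
    (F1 F2 : {set V}) (f : V -> V)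
    (o o1 o2 : {set V} -> seq V) :
  is_complex K1 -> is_complex K2 ->
  [disjoint verts K1 & verts K2] ->
  F1 \in K1 -> F2 \in K2 -> #|F1| = k.+1 -> #|F2| = k.+1 ->
  f @: F1 = F2 ->
  k <= i.+1 ->
  is_orientation (wedge K1 K2 F1 f) o ->
  is_orientation K1 o1 -> is_orientation K2 o2 ->
  (balanced (wedge K1 K2 F1 f) o i <-> balanced K1 o1 i /\ balanced K2 o2 i).
Proof.
move=> cK1 cK2 disj F1K1 F2K2 cF1 cF2 fF1 k_le oK oK1 oK2; split => [bal | [bal1 bal2]].
  exact: (balanced_wedge_parts disj F1K1 F2K2 cF1 cF2 fF1 oK oK1 oK2 bal).
exact: (balanced_wedge_glue cK1 cK2 disj F1K1 F2K2 cF1 cF2 fF1 oK oK1 oK2 k_le bal1 bal2).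
Qed.
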